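(* Define: (a) $a_n$ ($n\ge0$) as the number of letters of $P_1^n(\mathtt L)$, where $P_1$ is the letterwise substitution $\mathtt R\mapsto\mathtt{Rr}$, $\mathtt r\mapsto\mathtt S$, $\mathtt L\mapsto\mathtt S$, $\mathtt l\mapsto\mathtt{Ll}$, $\mathtt S\mapsto\mathtt{Rl}$, $\mathtt s\mapsto\mathtt{Lr}$; (b) $b_n$ ($n\ge1$) by $\frac{x(1+x^2)}{1-x-2x^3}=\sum_{n\ge1}b_nx^n$; (c) $c_n=|S_n|$ for $n\ge1$, where $S_n$ is the set of binary sequences of length $n$ with no maximal run of zeros of length $\equiv1\pmod 3$, and $c_0:=1$; (d) $d_n=|A_n|$ for $n\ge1$, where $A_n$ is the set of $n\times2$ arrays over $\{0,1,2\}$ in which every $1$ has a $0$ immediately to its left or above it, no $0$ has a $0$ immediately to its left or above it, and every $2$ has in its column a $1$ immediately above it and a $0$ immediately above that. Then for all $n\ge0$, $$a_n=b_{n+1}=c_n=d_{n+1}.$$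
   Context: $a_n$ is the length of the right side boundary of the polyomino $\mathcal S_n$ containing the $n$-th Harter–Heighway dragon curve. The sequences begin $1,1,2,4,6,10,\dots$ (for $a_0,a_1,\ldots$). *)

From HB Require Import structures.
From mathcomp Require Import all_boot all_order all_algebra.
Set Implicit Arguments. Unset Strict Implicit. Unset Printing Implicit Defensive.
Import GRing.Theory.

Inductive letter := xR | xr | xL | xl | xS | xs.

Definition P1 (c : letter) : seq letter :=
  match c with
  | xR => [:: xR; xr]
  | xr => [:: xS]
  | xL => [:: xS]
  | xl => [:: xL; xl]
  | xS => [:: xR; xl]
  | xs => [:: xL; xr]
  end.

Definition P1w (w : seq letter) : seq letter := flatten (map P1 w).

Definition a (n : nat) : nat := size (iter n P1w [:: xL]).

(* (b) b is the coefficient sequence of the formal power series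
   x(1+x^2)/(1-x-2x^3), i.e. (1 - x - 2x^3) * (sum_n b_n x^n) = x + x^3
   as formal power series (coefficientwise Cauchy product). *)
Definition gf_den : {poly int} := (1 - 'X - 2%:P * 'X^3)%R.
Definition gf_num : {poly int} := ('X + 'X^3)%R.

Definition is_gf_coeffs (b : nat -> int) : Prop :=
  forall n : nat, (\sum_(i < n.+1) gf_den`_i * b (n - i)%N = gf_num`_n)%R.

(* (c) binary sequences: true = 1, false = 0.
   [i, j) is a maximal run of zeros of s. *)
Definition is_max_zero_run (s : seq bool) (i j : nat) : bool :=
  [&& i < j, j <= size s,
      all (fun k => ~~ nth true s k) (iota i (j - i)),
      (i == 0) || nth false s i.-1
    & (j == size s) || nth false s j].

Definition no_bad_zero_run (s : seq bool) : bool :=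
  all (fun i => all (fun j => ~~ (is_max_zero_run s i j && ((j - i) %% 3 == 1)))
                    (iota 0 (size s).+1))
      (iota 0 (size s).+1).

Definition c (n : nat) : nat :=
  if n is 0 then 1 else #|[set t : n.-tuple bool | no_bad_zero_run t]|.

(* (d) n x 2 arrays over {0,1,2}; row index i (top to bottom), column j.
   "left of (i,j)" = (i, j-1), "above (i,j)" = (i-1, j). *)
Definition mget (n : nat) (A : 'M['I_3]_(n, 2)) (i j : nat) : option nat :=
  match (insub i : option 'I_n), (insub j : option 'I_2) with
  | Some i', Some j' => Some (nat_of_ord (A i' j'))
  | _, _ => None
  end.

Definition left_is (n : nat) (A : 'M['I_3]_(n, 2)) (i j v : nat) : bool :=
  (0 < j) && (mget A i j.-1 == Some v).
Definition above_is (n : nat) (A : 'M['I_3]_(n, 2)) (i j v : nat) : bool :=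
  (0 < i) && (mget A i.-1 j == Some v).

Definition ok_array (n : nat) (A : 'M['I_3]_(n, 2)) : bool :=
  [forall i : 'I_n, forall j : 'I_2,
    [&& ((A i j : nat) == 1) ==> (left_is A i j 0 || above_is A i j 0),
        ((A i j : nat) == 0) ==> ~~ (left_is A i j 0 || above_is A i j 0)
      & ((A i j : nat) == 2) ==>
          (above_is A i j 1 && (1 < i) && (mget A i.-2 j == Some 0))]].

Definition d (n : nat) : nat := #|[set A : 'M['I_3]_(n, 2) | ok_array A]|.

From mathcomp Require Import all_boot all_order all_algebra.
From mathcomp Require Import zify.
From Stdlib Require Import Lia.
Set Implicit Arguments. Unset Strict Implicit. Unset Printing Implicit Defensive.
Import GRing.Theory.

(* All four sequences satisfy u(n+3) = u(n+2) + 2 u(n) with initial values 1, 1, 2.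
   For a: the length of P1^n(w) is additive in w, and r and L have the same image S,
   so expanding three substitution steps gives the recurrence.  For b: it is the
   recurrence encoded by the denominator 1 - x - 2x^3.  For c: a word is read by an
   automaton remembering the length mod 3 of the current zero run.  For d: arrays are
   built row by row, the admissibility of a row depends only on the two rows above it,
   and the numbers X, Y, Z of completions from the reachable pairs of rows satisfy
   X' = X + Z, Z' = 2Y, Y' = X. *)


Lemma eq_rec3 (T : Type) (g : T -> T -> T -> T) (u v : nat -> T) :
    (forall n, u n.+3 = g (u n) (u n.+1) (u n.+2)) ->
    (forall n, v n.+3 = g (v n) (v n.+1) (v n.+2)) ->
  u 0 = v 0 -> u 1 = v 1 -> u 2 = v 2 -> u =1 v.
Proof.
move=> recu recv e0 e1 e2 n.
suff [] : [/\ u n = v n, u n.+1 = v n.+1 & u n.+2 = v n.+2] by [].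
elim: n => [|n [h0 h1 h2]]; first by [].
by split=> //; rewrite recu recv h0 h1 h2.
Qed.

Definition dragon_rec (u : nat -> nat) := forall n, u n.+3 = u n.+2 + 2 * u n.

Lemma dragon_rec_eq (u v : nat -> nat) : dragon_rec u -> dragon_rec v ->
  u 0 = v 0 -> u 1 = v 1 -> u 2 = v 2 -> u =1 v.
Proof. exact: (@eq_rec3 _ (fun x _ z => z + 2 * x)). Qed.

Section Substitution.
Variables (T : Type) (f : T -> seq T).

Definition subst_word (w : seq T) : seq T := flatten (map f w).

Definition subst_size n (x : T) : nat := size (iter n subst_word [:: x]).

Lemma iter_subst_cat n w1 w2 :
  iter n subst_word (w1 ++ w2) = iter n subst_word w1 ++ iter n subst_word w2.
Proof. by elim: n => //= n ->; rewrite /subst_word map_cat flatten_cat. Qed.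

Lemma size_iter_subst n w : size (iter n subst_word w) = sumn (map (subst_size n) w).
Proof.
elim: w => [|x w IH]; first by elim: n => //= n /size0nil ->.
by rewrite -cat1s iter_subst_cat size_cat IH.
Qed.

Lemma subst_sizeS n x : subst_size n.+1 x = sumn (map (subst_size n) (f x)).
Proof. by rewrite /subst_size iterSr size_iter_subst /subst_word /= cats0. Qed.

End Substitution.

Lemma a_subst_size n : a n = subst_size P1 n xL.
Proof. by []. Qed.

Lemma subst_size_P1_r n : subst_size P1 n xr = subst_size P1 n xL.
Proof. by case: n => // n; rewrite !subst_sizeS. Qed.

Lemma a_rec : dragon_rec a.
Proof.
move=> n; rewrite !a_subst_size; do 3 rewrite !subst_sizeS /=.
by rewrite subst_size_P1_r; lia.
Qed.

Lemma gf_den_coef i : (gf_den`_i =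
  if i == 0 then 1 else if i == 1 then -1 else if i == 3 then -2 else 0)%R.
Proof. by rewrite /gf_den !coefE; case: i => [|[|[|[|i]]]]. Qed.

Lemma gf_num_coef i : (gf_num`_i = if i == 1 then 1 else if i == 3 then 1 else 0)%R.
Proof. by rewrite /gf_num !coefE; case: i => [|[|[|[|i]]]]. Qed.

Section GeneratingFunction.
Variable b : nat -> int.
Hypothesis hb : is_gf_coeffs b.

Lemma gf_coeffs_rec n : b n.+3 = (b n.+2 + 2 * b n + gf_num`_n.+3)%R.
Proof.
have := hb n.+3; rewrite !big_ord_recl big1 => [|i _]; last first.
  by rewrite gf_den_coef mul0r.
rewrite /= /bump /= !gf_den_coef /= !subSS !subn0; lia.
Qed.

Lemma gf_coeffs_init : [/\ b 0 = 0, b 1 = 1 & b 2 = 1]%R.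
Proof.
have := hb 0; have := hb 1; have := hb 2.
rewrite !big_ord_recl !big_ord0 /= /bump /= !gf_den_coef !gf_num_coef /=.
by rewrite !addn0 !subSS !subn0 => h2 h1 h0; split; lia.
Qed.

Lemma gf_coeffs_a n : b n.+1 = a n.
Proof.
have [b0 b1 b2] := gf_coeffs_init.
apply: (@eq_rec3 _ (fun x _ z => z + 2 * x)%R (fun n => b n.+1) (fun n => Posz (a n))).
- by move=> m; rewrite gf_coeffs_rec gf_num_coef addr0.
- by move=> m; rewrite a_rec PoszD PoszM.
- by rewrite b1.
- by rewrite b2.
- by rewrite gf_coeffs_rec b0 b2 gf_num_coef.
Qed.

End GeneratingFunction.

Section CountTuples.
Variable T : finType.

Definition count_tuples n (P : pred (seq T)) : nat := \sum_(t : n.-tuple T) P t.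

Lemma card_tuples_count n (P : pred (seq T)) :
  #|[set t : n.-tuple T | P t]| = count_tuples n P.
Proof.
rewrite /count_tuples -sum1_card big_mkcond /=; apply: eq_bigr => t _.
by rewrite inE; case: (P t).
Qed.

Lemma count_tuples0 P : count_tuples 0 P = P [::].
Proof.
rewrite /count_tuples (eq_bigr (fun _ => nat_of_bool (P [::]))) => [|t _].
  by rewrite sum_nat_const card_tuple mul1n.
by rewrite tuple0.
Qed.

Lemma count_tuplesS n P :
  count_tuples n.+1 P = \sum_(x : T) count_tuples n (fun s => P (x :: s)).
Proof.
rewrite /count_tuples (reindex (fun p : T * n.-tuple T => cons_tuple p.1 p.2)) /=.
  by rewrite -(pair_big xpredT xpredT (fun x (t : n.-tuple T) => nat_of_bool (P (x :: t)))).
exists (fun t : n.+1.-tuple T => (thead t, [tuple of behead t])).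
  by move=> [x t] _ /=; congr pair; apply: val_inj.
by move=> [[|x s] //= ?] _; apply: val_inj.
Qed.

Lemma eq_count_tuples n P Q : P =1 Q -> count_tuples n P = count_tuples n Q.
Proof. by move=> eqPQ; apply: eq_bigr => t _; rewrite eqPQ. Qed.

Lemma count_tuples_andl n (b : bool) P :
  count_tuples n (fun s => b && P s) = b * count_tuples n P.
Proof. by case: b; rewrite ?mul1n ?mul0n // /count_tuples big1. Qed.

End CountTuples.

Definition no_bad_run (s : seq bool) :=
  forall i j, is_max_zero_run s i j -> (j - i) %% 3 != 1.

Lemma no_bad_zero_runP s : reflect (no_bad_run s) (no_bad_zero_run s).
Proof.
apply: (iffP idP) => [nbs i j run|nbs].
  have /and5P [ltij lejs _ _ _] := run.
  have := allP (allP nbs i _) j; rewrite run !mem_iota; apply; lia.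
apply/allP => i _; apply/allP => j _; apply/negP => /andP [run].
by rewrite (negbTE (nbs i j run)).
Qed.

Section LeadingZeros.
Variables (k : nat) (t : seq bool).
(* [t] is empty or starts with a one, so [k] counts all the leading zeros. *)
Hypothesis t_head : head true t.

Lemma nth_leading_zeros x0 m :
  nth x0 (nseq k false ++ t) m = if m < k then false else nth x0 t (m - k).
Proof. by rewrite nth_cat size_nseq nth_nseq; case: ltnP. Qed.

Lemma size_leading_zeros : size (nseq k false ++ t) = k + size t.
Proof. by rewrite size_cat size_nseq. Qed.

Lemma max_zero_run_leading : 0 < k -> is_max_zero_run (nseq k false ++ t) 0 k.
Proof.
move=> k_gt0; rewrite /is_max_zero_run k_gt0 size_leading_zeros leq_addr eqxx subn0 /=.
apply/andP; split.
  by apply/allP => m; rewrite mem_iota nth_leading_zeros add0n => /andP [_ ->].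
rewrite nth_leading_zeros ltnn subnn.
by case: t t_head => [_|x u /= ->]; rewrite ?addn0 ?eqxx ?orbT.
Qed.

Lemma max_zero_run_leadingE i j :
  is_max_zero_run (nseq k false ++ t) i j -> i <= k -> i = 0 /\ j = k.
Proof.
case/and5P => ltij; rewrite size_leading_zeros => lejs zeros left right le_ik.
have i0 : i = 0.
  by case: i left le_ik {ltij zeros} => //= i; rewrite nth_leading_zeros => /[swap] ->.
split=> //; case: (ltngtP j k) => [ltjk|ltkj|//].
  by move: right; rewrite nth_leading_zeros ltjk; case: eqP => //=; lia.
have := allP zeros k; rewrite mem_iota nth_leading_zeros ltnn subnn => zero_k.
case: t t_head lejs zero_k => [_|x u /= -> _ zero_k]; first by rewrite addn0; lia.
by have /zero_k : i <= k < i + (j - i) by lia.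
Qed.

End LeadingZeros.

Lemma max_zero_run_shift k u i j :
  is_max_zero_run (nseq k false ++ true :: u) (k.+1 + i) (k.+1 + j) = is_max_zero_run u i j.
Proof.
have nth_shift x0 m : nth x0 (nseq k false ++ true :: u) (k.+1 + m) = nth x0 u m.
  rewrite nth_leading_zeros.
  have -> : (k.+1 + m < k) = false by lia.
  by have -> : k.+1 + m - k = m.+1 by lia.
rewrite /is_max_zero_run ltn_add2l size_leading_zeros /= -addSnnS leq_add2l.
rewrite subnDl eqn_add2l nth_shift iotaDl all_map.
congr [&& _, _, _, _ & _]; first by apply: eq_all => m /=; rewrite nth_shift.
case: i => [|i]; first by rewrite addn0 nth_leading_zeros ltnn subnn.
by rewrite addnS -addSn nth_shift.
Qed.

Lemma no_bad_run_nil : no_bad_run [::].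
Proof. by move=> i j /and5P [/= ltij lej0]; lia. Qed.

Lemma no_bad_run_leading k t : head true t ->
  no_bad_run (nseq k false ++ t) <-> k %% 3 != 1 /\ no_bad_run (behead t).
Proof.
move=> t_head; split=> [nbs|[k_ok nbt] i j run].
  split; first by case: k nbs => // k nbs; rewrite -(subn0 k.+1) nbs ?max_zero_run_leading.
  case: t t_head nbs => [_ _|x u /= -> nbs i j run]; first exact: no_bad_run_nil.
  by rewrite -(subnDl k.+1) nbs ?max_zero_run_shift.
case: (leqP i k) => [le_ik|lt_ki].
  by case: (max_zero_run_leadingE t_head run le_ik) => -> ->; rewrite subn0.
case: t t_head run nbt => [_|x u /= -> run nbt].
  by case/and5P; rewrite size_leading_zeros addn0; lia.
have [ei ej] : i = k.+1 + (i - k.+1) /\ j = k.+1 + (j - k.+1) by case/and5P: run; lia.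
by move: run; rewrite ei ej subnDl max_zero_run_shift; apply: nbt.
Qed.

Fixpoint run_ok (k : nat) (s : seq bool) : bool :=
  match s with
  | [::] => k %% 3 != 1
  | false :: t => run_ok k.+1 t
  | true :: t => (k %% 3 != 1) && run_ok 0 t
  end.

Lemma no_bad_run_ok k s : no_bad_run (nseq k false ++ s) <-> run_ok k s.
Proof.
elim: s k => [|[|] t IH] k /=.
- rewrite cats0 -[nseq k false]cats0 no_bad_run_leading //.
  by split=> [[]|k_ok] //; split=> //; exact: no_bad_run_nil.
- rewrite no_bad_run_leading //=.
  by split=> [[-> /(IH 0)]|/andP [-> /(IH 0)]].
- by rewrite -IH -addn1 nseqD -catA.
Qed.

Lemma no_bad_zero_run_ok s : no_bad_zero_run s = run_ok 0 s.
Proof.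
by apply/idP/idP => [/no_bad_zero_runP/(no_bad_run_ok 0)|/(no_bad_run_ok 0)/no_bad_zero_runP].
Qed.

Lemma run_ok_mod3 k s : run_ok k s = run_ok (k %% 3) s.
Proof.
elim: s k => [|[|] t IH] k /=; rewrite ?modn_mod //.
by rewrite IH [RHS]IH -addn1 -[(k %% 3).+1]addn1 modnDml.
Qed.

Definition count_run_ok k n := count_tuples n (run_ok k).

Lemma count_run_okS k n :
  count_run_ok k n.+1 = (k %% 3 != 1) * count_run_ok 0 n + count_run_ok k.+1 n.
Proof. by rewrite /count_run_ok count_tuplesS big_bool /= count_tuples_andl. Qed.

Lemma count_run_ok3 n : count_run_ok 3 n = count_run_ok 0 n.
Proof. exact: eq_count_tuples (run_ok_mod3 3). Qed.

Lemma count_run_ok_rec : dragon_rec (count_run_ok 0).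
Proof.
move=> n; rewrite (count_run_okS 0 n.+2) (count_run_okS 1 n.+1) (count_run_okS 2 n).
by rewrite count_run_ok3 /=; lia.
Qed.

Lemma c_count_run_ok n : c n = count_run_ok 0 n.
Proof.
case: n => [|n]; first by rewrite /count_run_ok count_tuples0.
by rewrite /c card_tuples_count (eq_count_tuples _ no_bad_zero_run_ok).
Qed.

Lemma c_a n : c n = a n.
Proof.
rewrite c_count_run_ok; apply: (dragon_rec_eq count_run_ok_rec a_rec);
  by rewrite ?count_run_okS /count_run_ok !count_tuples0.
Qed.

Definition entry (r : option (nat * nat)) (j : nat) : option nat :=
  omap (fun r => if j == 0 then r.1 else r.2) r.

Definition cell_ok (left above above2 : option nat) (v : nat) : bool :=
  [&& (v == 1) ==> ((left == Some 0) || (above == Some 0)),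
      (v == 0) ==> ~~ ((left == Some 0) || (above == Some 0))
    & (v == 2) ==> ((above == Some 1) && (above2 == Some 0))].

Definition row_ok (p2 p1 : option (nat * nat)) (r : nat * nat) : bool :=
  cell_ok None (entry p1 0) (entry p2 0) r.1 &&
  cell_ok (Some r.1) (entry p1 1) (entry p2 1) r.2.

Fixpoint rows_ok (p2 p1 : option (nat * nat)) (s : seq (nat * nat)) : bool :=
  if s is r :: s' then row_ok p2 p1 r && rows_ok p1 (Some r) s' else true.

Definition nat_row (r : 'I_3 * 'I_3) : nat * nat := (nat_of_ord r.1, nat_of_ord r.2).

(* [p2] and [p1] are the two rows above the next one, [None] outside the array. *)
Definition count_rows p2 p1 n :=
  count_tuples n (fun s => rows_ok p2 p1 (map nat_row s)).

Lemma count_rows0 p2 p1 : count_rows p2 p1 0 = 1.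
Proof. by rewrite /count_rows count_tuples0. Qed.

Lemma count_rowsS p2 p1 n : count_rows p2 p1 n.+1 =
  \sum_(x < 3) \sum_(y < 3)
    row_ok p2 p1 (x : nat, y : nat) * count_rows p1 (Some (x : nat, y : nat)) n.
Proof.
rewrite /count_rows count_tuplesS [RHS]pair_bigA /=.
by apply: eq_bigr => -[x y] _; rewrite count_tuples_andl.
Qed.

Local Notation r01 := (Some (0, 1)).
Local Notation r10 := (Some (1, 0)).
Local Notation r21 := (Some (2, 1)).
Local Notation r02 := (Some (0, 2)).
Local Notation r12 := (Some (1, 2)).
Local Notation r20 := (Some (2, 0)).

Ltac expand_count_rows :=
  rewrite !count_rowsS !big_ord_recl !big_ord0 /= /bump /= ?mul0n ?mul1n ?add0n ?addn0 ?add1n.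

(* Below the first two rows (01 and 10) only the pairs of rows named here occur, and
   their completion counts fall into three classes. *)
Lemma count_rows_classes n :
  [/\ count_rows r02 r10 n = count_rows r01 r10 n,
      count_rows r20 r01 n = count_rows r01 r10 n,
      count_rows r10 r01 n = count_rows r01 r10 n,
      count_rows r21 r01 n = count_rows r21 r02 n &
      [/\ count_rows r12 r01 n = count_rows r21 r02 n,
          count_rows r12 r20 n = count_rows r21 r02 n &
          count_rows r01 r12 n = count_rows r10 r21 n]].
Proof.
elim: n => [|n [e1 e2 e3 e4 [e5 e6 e7]]]; first by rewrite !count_rows0.
by expand_count_rows; split; try split; lia.
Qed.

Lemma count_rows_step n :
  [/\ count_rows r01 r10 n.+1 = count_rows r01 r10 n + count_rows r10 r21 n,
      count_rows r10 r21 n.+1 = 2 * count_rows r21 r02 n &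
      count_rows r21 r02 n.+1 = count_rows r01 r10 n].
Proof.
have [e1 _ e3 e4 _] := count_rows_classes n.
by expand_count_rows; split; lia.
Qed.

Lemma count_rows_rec : dragon_rec (count_rows r01 r10).
Proof.
move=> n; have [-> _ _] := count_rows_step n.+2.
have [_ -> _] := count_rows_step n.+1; have [_ _ ->] := count_rows_step n.
lia.
Qed.

Lemma count_rows_start n : count_rows None None n.+2 = count_rows r01 r10 n.
Proof. by do 2 expand_count_rows. Qed.

Lemma rows_ok_all p2 p1 s : rows_ok p2 p1 s =
  all (fun i => row_ok (nth None (p2 :: p1 :: map Some s) i)
                       (nth None (p2 :: p1 :: map Some s) i.+1) (nth (0, 0) s i))
      (iota 0 (size s)).
Proof. by elim: s p2 p1 => [//|r s IH] p2 p1 /=; rewrite IH (iotaDl 1 0) all_map. Qed.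

Lemma forall_ord2 (P : pred 'I_2) : [forall j, P j] = P ord0 && P ord_max.
Proof.
apply/forallP/andP => [P_all|[P0 P1] [[|[|m]] lt_m2]]; first by split; apply: P_all.
- by rewrite (_ : Ordinal lt_m2 = ord0) //; apply: val_inj.
- by rewrite (_ : Ordinal lt_m2 = ord_max) //; apply: val_inj.
- by [].
Qed.

Section ArrayRows.
Variables (n : nat) (A : 'M['I_3]_(n, 2)).

Definition mx_rows : n.-tuple ('I_3 * 'I_3) := [tuple (A i ord0, A i ord_max) | i < n].

(* [ok_array A] unfolds to [[forall i, ok_row i]]. *)
Definition ok_row (i : 'I_n) : bool :=
  [forall j : 'I_2,
    [&& ((A i j : nat) == 1) ==> (left_is A i j 0 || above_is A i j 0),
        ((A i j : nat) == 0) ==> ~~ (left_is A i j 0 || above_is A i j 0)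
      & ((A i j : nat) == 2) ==>
          (above_is A i j 1 && (1 < i) && (mget A i.-2 j == Some 0))]].

Definition mx_entry k j := odflt 0 (mget A k j).

Lemma mx_entryE (i : 'I_n) (j : 'I_2) : nat_of_ord (A i j) = mx_entry i j.
Proof. by rewrite /mx_entry /mget !valK. Qed.

Lemma mget_entry k j : k < n -> j < 2 -> mget A k j = Some (mx_entry k j).
Proof. by move=> lt_kn lt_j2; rewrite /mx_entry /mget !insubT. Qed.

Lemma nth_mx_rows k :
  k < n -> nth (0, 0) (map nat_row mx_rows) k = (mx_entry k 0, mx_entry k 1).
Proof.
move=> lt_kn; rewrite (nth_map (ord0, ord0)) ?size_tuple //.
by rewrite -(tnth_nth _ _ (Ordinal lt_kn)) tnth_mktuple /nat_row /= !mx_entryE.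
Qed.

Lemma nth_prev_rows k : k < n ->
  nth None (None :: None :: map Some (map nat_row mx_rows)) k.+2 =
  Some (mx_entry k 0, mx_entry k 1).
Proof.
move=> lt_kn.
change (nth None (map Some (map nat_row mx_rows)) k = Some (mx_entry k 0, mx_entry k 1)).
by rewrite (nth_map (0, 0)) ?nth_mx_rows // size_map size_tuple.
Qed.

Lemma ok_row_rows (i : 'I_n) : ok_row i =
  row_ok (nth None (None :: None :: map Some (map nat_row mx_rows)) i)
         (nth None (None :: None :: map Some (map nat_row mx_rows)) i.+1)
         (nth (0, 0) (map nat_row mx_rows) i).
Proof.
rewrite /ok_row forall_ord2 !mx_entryE /left_is /above_is.
case: i => [[|[|m]] lt_mn].
- by rewrite nth_mx_rows //= !mget_entry.
- have lt_0n : 0 < n by lia.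
  rewrite nth_prev_rows // nth_mx_rows //= !mget_entry //.
  by rewrite /row_ok /cell_ok /= ?andbF ?andFb.
- have [lt_mn' lt_m1n] : m < n /\ m.+1 < n by lia.
  rewrite nth_prev_rows // nth_prev_rows // nth_mx_rows //= !mget_entry //.
  by rewrite /row_ok /cell_ok /= !andbT.
Qed.

Lemma ok_array_rows : ok_array A = rows_ok None None (map nat_row mx_rows).
Proof.
rewrite rows_ok_all size_map size_tuple.
apply/forallP/allP => [ok_rows k|ok_rows i].
  rewrite mem_iota add0n => /andP [_ lt_kn].
  by rewrite -(ok_row_rows (Ordinal lt_kn)); apply: ok_rows.
by change (ok_row i); rewrite ok_row_rows; apply: ok_rows; rewrite mem_iota add0n ltn_ord.
Qed.

End ArrayRows.

Definition rows_mx n (t : n.-tuple ('I_3 * 'I_3)) : 'M['I_3]_(n, 2) :=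
  \matrix_(i, j) if j == ord0 then (tnth t i).1 else (tnth t i).2.

Lemma mx_rowsK n : cancel (@mx_rows n) (@rows_mx n).
Proof.
move=> A; apply/matrixP => i j; rewrite mxE tnth_mktuple /=.
by case: eqP => [-> //|/eqP]; case: j => -[|[|]] //= ? ?; congr (A i _); apply: val_inj.
Qed.

Lemma rows_mxK n : cancel (@rows_mx n) (@mx_rows n).
Proof.
by move=> t; apply: eq_from_tnth => i; rewrite tnth_mktuple !mxE /=; case: (tnth t i).
Qed.

Lemma d_count_rows n : d n = count_rows None None n.
Proof.
rewrite /d /count_rows /count_tuples -sum1_card big_mkcond /=.
rewrite (reindex (@mx_rows n)) /=.
  by apply: eq_bigr => A _; rewrite inE ok_array_rows; case: rows_ok.
exact/onW_bij/(Bijective (@mx_rowsK n) (@rows_mxK n)).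
Qed.

Lemma d_a n : d n.+1 = a n.
Proof.
rewrite d_count_rows; case: n => [|n]; first by expand_count_rows; rewrite count_rows0.
rewrite count_rows_start.
apply: (@dragon_rec_eq (count_rows r01 r10) (fun n => a n.+1)).
- exact: count_rows_rec.
- by move=> m; rewrite a_rec.
- by rewrite count_rows0.
- by have [-> _ _] := count_rows_step 0; rewrite !count_rows0.
- have [-> _ _] := count_rows_step 1; have [-> -> _] := count_rows_step 0.
  by rewrite !count_rows0.
Qed.

Theorem corollary1 (b : nat -> int) (hb : is_gf_coeffs b) :
  forall n : nat, [/\ Posz (a n) = b n.+1, c n = a n & d n.+1 = a n].
Proof. by move=> n; rewrite c_a d_a (gf_coeffs_a hb). Qed.
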